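(* Let $R$ be an $F$-finite $F$-pure ring of prime characteristic $p$, let $\mathfrak a,J$ be ideals with $\mathfrak a\subseteq\sqrt J$, and let $\overline R=R/\mathcal P(J)$ with images $\overline{\mathfrak a},\overline J$. Then $\operatorname{ct}_J(\mathfrak a)\le\operatorname{ct}_{\overline J}(\overline{\mathfrak a})$. In particular, if $R$ is local (or standard graded) with (homogeneous) maximal ideal $\mathfrak m$ and $\overline R=R/\mathcal P(\mathfrak m)$, then $\operatorname{fpt}(\mathfrak a)\le\operatorname{fpt}(\overline{\mathfrak a})$.
   Context: $J_e=\{f\in R\mid \varphi(f^{1/p^e})\in J \text{ for all }\varphi\in\operatorname{Hom}_R(R^{1/p^e},R)\}$; $\mathcal P(J)=\bigcap_{s\in\mathbb N}J_s$ (Cartier core); $b^J_{\mathfrak a}(p^e)=\max\{t\in\mathbb N\mid\mathfrak a^t\not\subseteq J_e\}$ and $\operatorname{ct}_J(\mathfrak a)=\lim_{e\to\infty}b^J_{\mathfrak a}(p^e)/p^e$, with the analogous notions in $\overline R$; $\operatorname{fpt}(\mathfrak a)=\operatorname{ct}_{\mathfrak m}(\mathfrak a)$. *)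

From HB Require Import structures.
From mathcomp Require Import all_boot all_order all_algebra.
From Stdlib Require Import Reals.
Set Implicit Arguments. Unset Strict Implicit. Unset Printing Implicit Defensive.
Import GRing.Theory.
Local Open Scope ring_scope.

Section Defs.
Variable A : comNzRingType.

Definition is_ideal (I : A -> Prop) : Prop :=
  I 0 /\ (forall x y, I x -> I y -> I (x + y)) /\ (forall r x, I x -> I (r * x)).

Definition sub_set (I K : A -> Prop) : Prop := forall x, I x -> K x.

Definition radical (J : A -> Prop) : A -> Prop := fun x => exists n : nat, J (x ^+ n).

Definition gen_by (s : seq A) : A -> Prop :=
  fun x => exists c : seq A, size c = size s /\ x = \sum_(i < size s) c`_i * s`_i.

Definition noetherian : Prop :=
  forall I, is_ideal I -> exists s : seq A, forall x, I x <-> gen_by s x.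

Definition ideal_mul (I K : A -> Prop) : A -> Prop :=
  fun z => exists s : seq (A * A),
    (forall q, q \in s -> I q.1 /\ K q.2) /\ z = \sum_(q <- s) q.1 * q.2.

Fixpoint ideal_pow (a : A -> Prop) (t : nat) : A -> Prop :=
  match t with
  | O => fun _ => True
  | S t' => ideal_mul a (ideal_pow a t')
  end.

Variable p : nat.

(* phi in Hom_A(A^{1/p^e}, A), identified with a p^{-e}-linear map A -> A:
   additive and phi (r^(p^e) * x) = r * phi x *)
Definition p_inv_linear (e : nat) (phi : A -> A) : Prop :=
  (forall x y, phi (x + y) = phi x + phi y) /\
  (forall r x, phi (r ^+ (expn p e) * x) = r * phi x).

Definition Je (J : A -> Prop) (e : nat) : A -> Prop :=
  fun f => forall phi, p_inv_linear e phi -> J (phi f).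

Definition cartier_core (J : A -> Prop) : A -> Prop :=
  fun f => forall s : nat, Je J s f.

(* F-finite: F_* A is a finitely generated A-module, i.e. there are
   g_1..g_n with every x = sum r_i^p g_i *)
Definition F_finite : Prop :=
  exists g : seq A, forall x : A, exists r : seq A,
    size r = size g /\ x = \sum_(i < size g) r`_i ^+ p * g`_i.

(* F-pure: the Frobenius A -> F_* A is pure, expressed by the
   linear-systems criterion for purity: every finite linear system with
   coefficients and right-hand side in A that is solvable in F_* A is
   solvable in A. In F_* A the system  M y = b  reads  M^[p] x = b^[p]. *)
Definition F_pure : Prop :=
  forall (m n : nat) (M : 'M[A]_(m, n)) (b : 'cV[A]_m),
    (exists x : 'cV[A]_n,
        map_mx (fun r => r ^+ p) M *m x = map_mx (fun r => r ^+ p) b) ->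
    exists y : 'cV[A]_n, M *m y = b.

Definition is_b (a J : A -> Prop) (e t : nat) : Prop :=
  ~ sub_set (ideal_pow a t) (Je J e) /\
  (forall t', ~ sub_set (ideal_pow a t') (Je J e) -> leq t' t).

Definition is_ct (a J : A -> Prop) (c : R) : Prop :=
  exists b : nat -> nat, (forall e, is_b a J e (b e)) /\
    Un_cv (fun e => (INR (b e) / INR (expn p e))%R) c.

Definition is_maximal (m : A -> Prop) : Prop :=
  is_ideal m /\ ~ m 1 /\
  (forall I, is_ideal I -> sub_set m I -> ~ I 1 -> sub_set I m).

Definition is_local_with_max (m : A -> Prop) : Prop :=
  is_maximal m /\ (forall m', is_maximal m' -> forall x, m' x <-> m x).

End Defs.

Definition image_set (A B : Type) (f : A -> B) (I : A -> Prop) : B -> Prop :=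
  fun y => exists x, I x /\ f x = y.

Definition is_quotient_by (A B : comNzRingType) (pi : {rmorphism A -> B})
  (K : A -> Prop) : Prop :=
  (forall y : B, exists x, pi x = y) /\ (forall x, pi x = 0 <-> K x).

(* A p^-e-linear map phi on A maps the Cartier core P(J) into itself, so it
   descends to A/P(J).  As P(J) is contained in J, the preimage of the image of J
   is J itself; hence phi(f) outside J gives the induced map sending the image of
   f outside the image of J.  So a^t not inside J_e forces the image of a^t not
   inside the e-th ideal of the image of J, i.e. b^J_a(p^e) is at most its
   counterpart in A/P(J), and the inequality passes to the limit. *)
From HB Require Import structures.
From mathcomp Require Import all_boot all_order all_algebra.
From Stdlib Require Import Reals ClassicalEpsilon.
Local Open Scope ring_scope.
Import GRing.Theory.
Set Implicit Arguments.

Lemma ideal_pow_image (A B : comNzRingType) (f : {rmorphism A -> B})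
    (a : A -> Prop) t x :
  ideal_pow a t x -> ideal_pow (image_set f a) t (f x).
Proof.
elim: t x => [//|t IHt] x /= [s [s_in ->]].
exists [seq (f q.1, f q.2) | q <- s]; split.
  move=> _ /mapP [q q_s ->] /=.
  have [aq1 powq2] := s_in q q_s.
  by split; [exists q.1 | exact: IHt].
by rewrite rmorph_sum big_map; apply: eq_bigr => q _; rewrite rmorphM.
Qed.

Section CartierCore.
Variables (A : comNzRingType) (p : nat).

Lemma p_inv_linearB e (phi : A -> A) :
  p_inv_linear p e phi -> forall x y, phi (x - y) = phi x - phi y.
Proof.
move=> [phiD _].
have phi0 : phi 0 = 0 by apply: (addrI (phi 0)); rewrite -phiD !addr0.
have phiN x : phi (- x) = - phi x by apply: (addrI (phi x)); rewrite -phiD !subrr.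
by move=> x y; rewrite phiD phiN.
Qed.

Lemma p_inv_linear_comp e s (phi psi : A -> A) :
  p_inv_linear p e phi -> p_inv_linear p s psi ->
  p_inv_linear p (s + e) (fun x => psi (phi x)).
Proof.
move=> [phiD phiZ] [psiD psiZ]; split=> [x y | r x]; first by rewrite phiD psiD.
by rewrite expnD exprM phiZ psiZ.
Qed.

Lemma cartier_core_sub (J : A -> Prop) : sub_set (cartier_core p J) J.
Proof. by move=> x Px; apply: (Px 0%N (fun y => y)); split. Qed.

Lemma cartier_core_stable (J : A -> Prop) e phi x :
  p_inv_linear p e phi -> cartier_core p J x -> cartier_core p J (phi x).
Proof.
move=> lin_phi Px s psi lin_psi.
exact: (Px (s + e)%N (fun y => psi (phi y)) (p_inv_linear_comp lin_phi lin_psi)).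
Qed.

Section QuotientByCore.
Variables (Abar : comNzRingType) (pi : {rmorphism A -> Abar}) (J : A -> Prop).
Hypothesis pi_quo : is_quotient_by pi (cartier_core p J).

Lemma p_inv_linear_quotient e phi :
  p_inv_linear p e phi ->
  exists phib, p_inv_linear p e phib /\ forall x, phib (pi x) = pi (phi x).
Proof.
move=> lin_phi; have [phiD phiZ] := lin_phi.
have [pi_surj pi_ker] := pi_quo.
have [sec secK] : {sec : Abar -> A | forall y, pi (sec y) = y}.
  by exists (fun y => proj1_sig (constructive_indefinite_description _ (pi_surj y)));
    move=> y; case: constructive_indefinite_description.
have phi_compat x x' : pi x = pi x' -> pi (phi x) = pi (phi x').
  move=> pi_xx'; apply/eqP; rewrite -subr_eq0 -rmorphB; apply/eqP/pi_ker.
  rewrite -(p_inv_linearB lin_phi); apply: cartier_core_stable lin_phi _.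
  by apply/pi_ker; rewrite rmorphB pi_xx' subrr.
have phibK x : pi (phi (sec (pi x))) = pi (phi x) by apply: phi_compat; rewrite secK.
exists (fun y => pi (phi (sec y))); split=> //; split=> [y1 y2 | r y].
  by rewrite -rmorphD -phiD; apply: phi_compat; rewrite rmorphD !secK.
by rewrite -(secK r) -rmorphM -phiZ; apply: phi_compat; rewrite rmorphM rmorphXn !secK.
Qed.

Lemma Je_of_quotient (J_ideal : is_ideal J) e x :
  Je p (image_set pi J) e (pi x) -> Je p J e x.
Proof.
move=> Jbar_x phi lin_phi.
have [phib [lin_phib phibK]] := p_inv_linear_quotient lin_phi.
have [j [Jj pi_j]] := Jbar_x phib lin_phib; rewrite phibK in pi_j.
have core_diff : cartier_core p J (phi x - j).
  by apply/(proj2 pi_quo); rewrite rmorphB pi_j subrr.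
have [_ [J_add _]] := J_ideal.
by rewrite -(subrK j (phi x)); apply: J_add Jj; apply: cartier_core_sub.
Qed.

Lemma is_b_le_quotient (J_ideal : is_ideal J) (a : A -> Prop) e t tbar :
  is_b p a J e t -> is_b p (image_set pi a) (image_set pi J) e tbar -> leq t tbar.
Proof.
move=> [not_sub _] [_ max_tbar]; apply: max_tbar => sub_bar; apply: not_sub.
move=> x pow_x; apply: Je_of_quotient => //.
exact/sub_bar/ideal_pow_image.
Qed.

Lemma is_ct_le_quotient (J_ideal : is_ideal J) (a : A -> Prop) (c cbar : R) :
  leq 1 p -> is_ct p a J c -> is_ct p (image_set pi a) (image_set pi J) cbar ->
  (c <= cbar)%R.
Proof.
move=> p_gt0 [b [b_spec b_cvg]] [bbar [bbar_spec bbar_cvg]].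
apply: (Rle_cv_lim _ b_cvg bbar_cvg) => e.
apply: Rmult_le_compat_r.
  by apply/Rlt_le/Rinv_0_lt_compat/lt_0_INR/ltP; rewrite expn_gt0 p_gt0.
by apply/le_INR/leP/(is_b_le_quotient J_ideal (b_spec e) (bbar_spec e)).
Qed.

End QuotientByCore.
End CartierCore.

Theorem mainTheorem16 (A : comNzRingType) (p : nat) :
  (p \in [pchar A]) -> noetherian A -> F_finite A p -> F_pure A p ->
  (forall (a J : A -> Prop), is_ideal a -> is_ideal J ->
     sub_set a (radical J) ->
     forall (Abar : comNzRingType) (pi : {rmorphism A -> Abar}),
       is_quotient_by pi (cartier_core p J) ->
       forall c cbar : R,
         is_ct p a J c ->
         is_ct p (image_set pi a) (image_set pi J) cbar ->
         (c <= cbar)%R)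
  /\
  (forall (m : A -> Prop), is_local_with_max m ->
     forall a : A -> Prop, is_ideal a -> sub_set a m ->
     forall (Abar : comNzRingType) (pi : {rmorphism A -> Abar}),
       is_quotient_by pi (cartier_core p m) ->
       forall c cbar : R,
         is_ct p a m c ->
         is_ct p (image_set pi a) (image_set pi m) cbar ->
         (c <= cbar)%R).
Proof.
(* Noetherianity, F-finiteness, F-purity and a in rad J only serve to make the
   limits exist, which the statement assumes. *)
move=> charAp _ _ _.
have p_gt0 : leq 1 p by apply/prime_gt0/(pcharf_prime charAp).
by split=> [a J _ J_ideal _ | m [[m_ideal _] _] a _ _] Abar pi pi_quo c cbar;
  apply: is_ct_le_quotient.
Qed.
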